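(* Let $F\subseteq P_{3,4}$ be a face and $J\subseteq J_F$ a linear subspace of codimension $1$ in $J_F$ with basis $q_1,\dots,q_k$. If there exists $h\in J_F\setminus J$ such that $q_1^2+\dots+q_k^2-\epsilon h^2$ is not nonnegative on $\mathbb P^2(\mathbb R)$ for every $\epsilon>0$, then there is a face $G\subsetneq F$ with $J=J_G$.
   Context: $H_k\subseteq\mathbb R[x,y,z]$: real ternary forms of degree $k$; $P_{3,4}=\{f\in H_4: f\ge0\text{ on }\mathbb P^2(\mathbb R)\}$. A face of $P_{3,4}$ is a convex subcone $F$ such that $a,b\in P_{3,4}$, $a+b\in F$ imply $a,b\in F$. For a face $F$, $J_F=\{q\in H_2:q^2\in F\}$ (a linear subspace). *)

(* real ternary forms represented as polynomial functions R^3 -> R. *)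
From Stdlib Require Import Reals.
Open Scope R_scope.

Definition tfun := R -> R -> R -> R.

Fixpoint fsum (n : nat) (f : nat -> R) : R :=
  match n with
  | O => 0
  | S m => fsum m f + f m
  end.

Definition is_form (k : nat) (f : tfun) : Prop :=
  exists c : nat -> nat -> R, forall x y z,
    f x y z = fsum (S k) (fun i => fsum (S (k - i))
                (fun j => c i j * x ^ i * y ^ j * z ^ (k - i - j)%nat)).

Definition tzero : tfun := fun _ _ _ => 0.
Definition tadd (f g : tfun) : tfun := fun x y z => f x y z + g x y z.
Definition tscal (a : R) (f : tfun) : tfun := fun x y z => a * f x y z.
Definition tsq (q : tfun) : tfun := fun x y z => (q x y z) ^ 2.

(** Nonnegative on P^2(R) (for forms of even degree: nonnegative on R^3). *)
Definition nonneg3 (f : tfun) : Prop := forall x y z, 0 <= f x y z.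

Definition P34 (f : tfun) : Prop := is_form 4 f /\ nonneg3 f.

Definition is_face (F : tfun -> Prop) : Prop :=
  (forall f, F f -> P34 f) /\
  F tzero /\
  (forall f g, F f -> F g -> F (tadd f g)) /\
  (forall a f, 0 <= a -> F f -> F (tscal a f)) /\
  (forall a b, P34 a -> P34 b -> F (tadd a b) -> F a /\ F b).

Definition JF (F : tfun -> Prop) (q : tfun) : Prop := is_form 2 q /\ F (tsq q).

Definition is_subspace (J : tfun -> Prop) : Prop :=
  J tzero /\
  (forall f g, J f -> J g -> J (tadd f g)) /\
  (forall a f, J f -> J (tscal a f)).

Definition lincomb (k : nat) (c : nat -> R) (q : nat -> tfun) : tfun :=
  fun x y z => fsum k (fun i => c i * q i x y z).

Definition is_basis (J : tfun -> Prop) (k : nat) (q : nat -> tfun) : Prop :=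
  (forall i, (i < k)%nat -> J (q i)) /\
  (forall c : nat -> R, (forall x y z, lincomb k c q x y z = 0) ->
       forall i, (i < k)%nat -> c i = 0) /\
  (forall p, J p -> exists c : nat -> R, forall x y z, p x y z = lincomb k c q x y z).

Definition codim1 (J K : tfun -> Prop) : Prop :=
  exists h0, K h0 /\ ~ J h0 /\
    forall p, K p -> exists a : R, J (fun x y z => p x y z - a * h0 x y z).

Definition sumsq (k : nat) (q : nat -> tfun) : tfun :=
  fun x y z => fsum k (fun i => (q i x y z) ^ 2).

From Stdlib Require Import Reals Lra Psatz FunctionalExtensionality.
Open Scope R_scope.

(* Put S = q_1^2 + ... + q_k^2 and let G be the face of P_{3,4}
   generated by S: the nonnegative quartics f with f <= l*S for some l >= 0.
   - G is a face for any S, and G is contained in every face F containing S;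
     S lies in F because each q_i lies in J_F and F is a convex cone.
   - The forms p whose square is dominated by S form a linear space; it
     contains every q_i (q_i^2 <= S), hence all of J.
   - The hypothesis on h says exactly that h^2 is not dominated by S, so h^2
     lies in F but not in G: the inclusion G ⊆ F is strict.
   - As J has codimension 1 in J_F and h ∈ J_F \ J has non-dominated square,
     no element of J_F \ J has dominated square; hence J_G = J. *)

Lemma fsum_ext n f g : (forall i, f i = g i) -> fsum n f = fsum n g.
Proof. intros H; induction n; simpl; [reflexivity | rewrite IHn, H; reflexivity]. Qed.

Lemma fsum_lin n a b f g :
  fsum n (fun i => a * f i + b * g i) = a * fsum n f + b * fsum n g.
Proof. induction n; simpl; [ring | rewrite IHn; ring]. Qed.

Lemma fsum_zero n f : (forall i, f i = 0) -> fsum n f = 0.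
Proof. intros H; induction n; simpl; [reflexivity | rewrite IHn, H; ring]. Qed.

Lemma form_ext k f g :
  (forall x y z, f x y z = g x y z) -> is_form k f -> is_form k g.
Proof. intros E [c Hc]; exists c; intros; rewrite <- E; apply Hc. Qed.

Lemma form_comb k a b f g : is_form k f -> is_form k g ->
  is_form k (fun x y z => a * f x y z + b * g x y z).
Proof.
  intros [c1 H1] [c2 H2]. exists (fun i j => a * c1 i j + b * c2 i j).
  intros x y z. rewrite H1, H2, <- fsum_lin. apply fsum_ext; intro i.
  rewrite <- fsum_lin. apply fsum_ext; intro j. ring.
Qed.

Lemma form_zero k : is_form k tzero.
Proof.
  exists (fun _ _ => 0). intros x y z. unfold tzero.
  symmetry; apply fsum_zero; intro i; apply fsum_zero; intro j; ring.
Qed.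

Lemma P34_zero : P34 tzero.
Proof. split; [apply form_zero | intros x y z; unfold tzero; lra]. Qed.

Lemma P34_add f g : P34 f -> P34 g -> P34 (tadd f g).
Proof.
  intros [Ff Nf] [Fg Ng]; split.
  - apply (form_ext 4 (fun x y z => 1 * f x y z + 1 * g x y z));
      [intros; unfold tadd; ring | now apply form_comb].
  - intros x y z; unfold tadd; specialize (Nf x y z); specialize (Ng x y z); lra.
Qed.

Lemma P34_scal a f : 0 <= a -> P34 f -> P34 (tscal a f).
Proof.
  intros Ha [Ff Nf]; split.
  - apply (form_ext 4 (fun x y z => a * f x y z + 0 * f x y z));
      [intros; unfold tscal; ring | now apply form_comb].
  - intros x y z; unfold tscal; specialize (Nf x y z); nra.
Qed.

Lemma P34_sub_below l S f : is_form 4 S -> is_form 4 f ->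
  (forall x y z, f x y z <= l * S x y z) ->
  P34 (fun x y z => l * S x y z - f x y z).
Proof.
  intros FS Ff B; split.
  - apply (form_ext 4 (fun x y z => l * S x y z + (-1) * f x y z));
      [intros; ring | now apply form_comb].
  - intros x y z; specialize (B x y z); lra.
Qed.

Definition dominated (S f : tfun) : Prop :=
  exists l, 0 <= l /\ forall x y z, f x y z <= l * S x y z.

Definition face_gen (S : tfun) (f : tfun) : Prop := P34 f /\ dominated S f.

Lemma face_gen_is_face S : is_face (face_gen S).
Proof.
  split; [now intros f [Pf _] |]. split; [|split; [|split]].
  - split; [exact P34_zero |].
    exists 0; split; [lra |]; intros; unfold tzero; lra.
  - intros f g [Pf [l1 [H1 B1]]] [Pg [l2 [H2 B2]]].
    split; [now apply P34_add |].
    exists (l1 + l2); split; [lra |]; intros x y z; unfold tadd.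
    specialize (B1 x y z); specialize (B2 x y z); lra.
  - intros a f Ha [Pf [l [Hl B]]]. split; [now apply P34_scal |].
    exists (a * l); split; [nra |]; intros x y z; unfold tscal.
    rewrite Rmult_assoc; apply Rmult_le_compat_l; auto.
  - (* 0 <= a, b and a + b <= l*S force a, b <= l*S *)
    intros a b Pa Pb [_ [l [Hl B]]]; split; split; auto; exists l; split; auto;
      intros x y z; specialize (B x y z); unfold tadd in B.
    + pose proof (proj2 Pb x y z); lra.
    + pose proof (proj2 Pa x y z); lra.
Qed.

(* Minimality: a face containing S contains the face generated by S,
   because l*S = f + (l*S - f) splits into two nonnegative quartics. *)
Lemma face_gen_sub F S : is_face F -> F S -> forall f, face_gen S f -> F f.
Proof.
  intros [FP [_ [_ [Fsc Fface]]]] FS f [[Ff Nf] [l [Hl B]]].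
  assert (Split : tscal l S = tadd f (fun x y z => l * S x y z - f x y z)).
  { do 3 (apply functional_extensionality; intro).
    unfold tscal, tadd; ring. }
  assert (FlS : F (tscal l S)) by (apply Fsc; auto).
  rewrite Split in FlS.
  refine (proj1 (Fface f _ (conj Ff Nf) _ FlS)).
  apply P34_sub_below; auto. exact (proj1 (FP S FS)).
Qed.

Lemma dominated_sq_ext S u v :
  (forall x y z, u x y z = v x y z) -> dominated S (tsq u) -> dominated S (tsq v).
Proof.
  intros E [l [Hl B]]; exists l; split; auto.
  intros x y z; unfold tsq; rewrite <- E; apply B.
Qed.

(* The forms whose square is dominated by S are closed under linear
   combinations, by (a u + b v)^2 <= 2 a^2 u^2 + 2 b^2 v^2. *)
Lemma dominated_sq_comb S a b u v :
  dominated S (tsq u) -> dominated S (tsq v) ->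
  dominated S (tsq (fun x y z => a * u x y z + b * v x y z)).
Proof.
  intros [l1 [H1 B1]] [l2 [H2 B2]]. exists (2 * a^2 * l1 + 2 * b^2 * l2).
  split; [nra |]. intros x y z; unfold tsq in *.
  specialize (B1 x y z); specialize (B2 x y z).
  set (U := u x y z) in *; set (V := v x y z) in *; set (s := S x y z) in *.
  assert (Hsq : (a * U + b * V)^2 <= 2 * a^2 * U^2 + 2 * b^2 * V^2)
    by (pose proof (pow2_ge_0 (a * U - b * V)); nra).
  assert (a^2 * U^2 <= a^2 * (l1 * s)) by (apply Rmult_le_compat_l; nra).
  assert (b^2 * V^2 <= b^2 * (l2 * s)) by (apply Rmult_le_compat_l; nra).
  nra.
Qed.

Lemma dominated_sq_lincomb S n c q :
  (forall i, (i < n)%nat -> dominated S (tsq (q i))) ->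
  dominated S (tsq (lincomb n c q)).
Proof.
  induction n as [| n IH]; intros Hq.
  - exists 0; split; [lra |]; intros; unfold tsq, lincomb; simpl; lra.
  - apply (dominated_sq_ext S
      (fun x y z => 1 * lincomb n c q x y z + c n * q n x y z));
      [intros; unfold lincomb; simpl; ring |].
    apply dominated_sq_comb; [apply IH; auto | apply Hq; lia].
Qed.

Lemma not_dominated_sq S h : nonneg3 S ->
  (forall eps, 0 < eps -> ~ nonneg3 (fun x y z => S x y z - eps * (h x y z)^2)) ->
  ~ dominated S (tsq h).
Proof.
  intros Snn Heps [l [Hl B]]. apply (Heps (/ (l + 1))).
  - apply Rinv_0_lt_compat; lra.
  - intros x y z. specialize (B x y z); specialize (Snn x y z); unfold tsq in B.
    assert (Hinv : 0 < / (l + 1)) by (apply Rinv_0_lt_compat; lra).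
    assert (/ (l + 1) * h x y z ^ 2 <= / (l + 1) * (l * S x y z))
      by (apply Rmult_le_compat_l; lra).
    assert (/ (l + 1) * (l * S x y z) <= S x y z).
    { replace (S x y z) with (/ (l + 1) * ((l + 1) * S x y z)) at 2 by (field; lra).
      apply Rmult_le_compat_l; nra. }
    lra.
Qed.

(* Indeed p = j + a h0; if a <> 0 then h0, and hence every element of K,
   would have dominated square. *)
Lemma codim1_dominated_sq S J K :
  codim1 J K -> (forall p, J p -> dominated S (tsq p)) ->
  forall h, K h -> ~ dominated S (tsq h) ->
  forall p, K p -> dominated S (tsq p) -> J p.
Proof.
  intros [h0 [_ [_ Hcod]]] JD h Kh Nh p Kp Dp.
  destruct (Hcod p Kp) as [a Ja].
  destruct (Req_dec a 0) as [Ha | Ha].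
  - replace p with (fun x y z => p x y z - a * h0 x y z); [exact Ja |].
    do 3 (apply functional_extensionality; intro). rewrite Ha; ring.
  - exfalso. destruct (Hcod h Kh) as [b Jb].
    assert (Dh0 : dominated S (tsq h0)).
    { apply (dominated_sq_ext S (fun x y z =>
        / a * p x y z + (- / a) * (p x y z - a * h0 x y z)));
        [intros; field; auto | apply dominated_sq_comb; auto]. }
    apply Nh, (dominated_sq_ext S (fun x y z =>
      1 * (h x y z - b * h0 x y z) + b * h0 x y z));
      [intros; ring | apply dominated_sq_comb; auto].
Qed.

Lemma sumsq_nonneg n q : nonneg3 (sumsq n q).
Proof.
  intros x y z; induction n as [| n IH]; unfold sumsq in *; cbn [fsum]; [lra |].
  pose proof (pow2_ge_0 (q n x y z)); lra.
Qed.

Lemma sumsq_dominates_term n q i : (i < n)%nat -> dominated (sumsq n q) (tsq (q i)).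
Proof.
  intros Hi; exists 1; split; [lra |]; intros x y z; unfold tsq, sumsq.
  induction n as [| n IH]; [lia |]; cbn [fsum].
  destruct (Nat.eq_dec i n) as [-> | Hne].
  - pose proof (sumsq_nonneg n q x y z); unfold sumsq in *; lra.
  - pose proof (IH ltac:(lia)); pose proof (pow2_ge_0 (q n x y z)); lra.
Qed.

Lemma sumsq_in_face F n q : is_face F ->
  (forall i, (i < n)%nat -> F (tsq (q i))) -> F (sumsq n q).
Proof.
  intros [_ [F0 [Fadd _]]] Hq; induction n as [| n IH]; [exact F0 |].
  change (F (tadd (sumsq n q) (tsq (q n)))).
  apply Fadd; [apply IH; auto | apply Hq; lia].
Qed.

Theorem mainTheorem14 :
  forall (F J : tfun -> Prop) (k : nat) (q : nat -> tfun),
    is_face F ->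
    is_subspace J ->
    (forall p, J p -> JF F p) ->
    codim1 J (JF F) ->
    is_basis J k q ->
    (exists h, JF F h /\ ~ J h /\
       forall eps : R, 0 < eps ->
         ~ nonneg3 (fun x y z => sumsq k q x y z - eps * (h x y z) ^ 2)) ->
    exists G : tfun -> Prop,
      is_face G /\
      (forall f, G f -> F f) /\
      (exists f, F f /\ ~ G f) /\
      (forall p, J p <-> JF G p).
Proof.
  intros F J k q HF _ HJF Hcod [Bq [_ Bspan]] [h [Fh [_ Heps]]].
  pose (S := sumsq k q).
  assert (FS : F S) by (apply sumsq_in_face; auto; intros i Hi; apply HJF, Bq, Hi).
  assert (JD : forall p, J p -> dominated S (tsq p)).
  { intros p Jp; destruct (Bspan p Jp) as [c Hc].
    apply (dominated_sq_ext S (lincomb k c q)); [intros; now rewrite Hc |].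
    apply dominated_sq_lincomb; intros; now apply sumsq_dominates_term. }
  assert (Nh : ~ dominated S (tsq h))
    by (apply not_dominated_sq; [apply sumsq_nonneg | exact Heps]).
  exists (face_gen S); split; [apply face_gen_is_face |].
  split; [exact (face_gen_sub F S HF FS) |].
  split; [exists (tsq h); split; [exact (proj2 Fh) | intros [_ Dh]; exact (Nh Dh)] |].
  intros p; split.
  - intros Jp; destruct (HJF p Jp) as [Fp Fp2].
    split; [exact Fp | split; [exact (proj1 HF _ Fp2) | exact (JD p Jp)]].
  - intros [Fp Gp2].
    apply (codim1_dominated_sq S J (JF F) Hcod JD h Fh Nh); [| exact (proj2 Gp2)].
    split; [exact Fp | exact (face_gen_sub F S HF FS _ Gp2)].
Qed.
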